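(* Let $N, F$ be positive integers with $F < N/2$, and let $M$ be encoded by a maximum-distance-separable code into $(F+1)N$ distinct fragments, any $F+1$ of which reconstruct $M$, partitioned into pairwise disjoint pools $S_1,\dots,S_N$ of size $F+1$, node $j$ storing only fragments from $S_j$. For an integer $x > F$ define the pruning rule $r(x) = \left\lceil \frac{F+1}{x-F} \right\rceil$. Let $Q \subseteq \{1,\dots,N\}$ be a set of nodes with $|Q| > F$ such that, before pruning, every node $u \in Q$ stores at least $r(|Q|)$ distinct fragments of $S_u$. Suppose each node $u$ prunes autonomously using some local value $q_u$ with $F < q_u \le |Q|$, i.e., it discards fragments until it retains exactly $\min(h_u, r(q_u))$ of them, where $h_u$ is the number it stored before pruning (different nodes may use different $q_u$). Then for every set $C$ of at most $F$ crashed nodes, the nodes of $Q \setminus C$ together still store at least $F+1$ distinct fragments of $M$ after pruning; hence $M$ remains reconstructable.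
   Context: $\lceil\cdot\rceil$ denotes the ceiling function. A crashed node loses all its fragments. The local value $q_u$ models a node's (possibly outdated) knowledge of how many nodes are known to store fragments of $M$. *)

From mathcomp Require Import all_boot.
Set Implicit Arguments. Unset Strict Implicit. Unset Printing Implicit Defensive.

Definition ceil_div (a b : nat) : nat := (a + b.-1) %/ b.

Definition prune_rule (F x : nat) : nat := ceil_div F.+1 (x - F).

From mathcomp Require Import all_boot.
From mathcomp Require Import zify.

Set Implicit Arguments.
Unset Strict Implicit.

(* Each surviving node of [Q] keeps at least [r(|Q|)] fragments, because its
   local value [q_u <= |Q|] can only make the pruning threshold larger.  At
   most [F] of the nodes of [Q] crash, so at least [|Q| - F] survive, and
   their pools are disjoint; hence together they keep at least
   [r(|Q|) * (|Q| - F) >= F + 1] distinct fragments, by the choice of [r]. *)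

Lemma leq_ceil_div a b c : 0 < b -> (ceil_div a b <= c) = (a <= c * b).
Proof. by move=> b_gt0; rewrite /ceil_div -ltnS ltn_divLR // mulSn; lia. Qed.

Lemma leq_mul_ceil_div a b : 0 < b -> a <= ceil_div a b * b.
Proof. by move=> b_gt0; rewrite -leq_ceil_div. Qed.

Lemma prune_rule_cover F x : F < x -> F.+1 <= prune_rule F x * (x - F).
Proof. by move=> Fx; apply: leq_mul_ceil_div; rewrite subn_gt0. Qed.

Lemma leq_prune_rule F x y :
  F < x -> x <= y -> prune_rule F y <= prune_rule F x.
Proof.
move=> Fx xy; have Fy : F < y := leq_trans Fx xy.
rewrite /prune_rule leq_ceil_div ?subn_gt0 //.
apply: leq_trans (prune_rule_cover Fx) _.
by rewrite leq_mul2l leq_sub2r ?orbT.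
Qed.

Lemma card_bigcup_disjoint (I T : finType) (A : {set I}) (G : I -> {set T}) :
  {in A &, forall i j, i != j -> [disjoint G i & G j]} ->
  #|\bigcup_(i in A) G i| = \sum_(i in A) #|G i|.
Proof.
(* Padding [G] with [set0] outside [A] makes it disjoint on all of [I]. *)
move=> disjG; pose GA i := if i \in A then G i else set0.
have disjGA i j : i != j -> [disjoint GA i & GA j].
  rewrite /GA; case: ifP => iA; case: ifP => jA;
    by [exact: disjG | move=> _; rewrite -setI_eq0 ?setI0 ?set0I].
rewrite big_mkcond -/GA /= [\sum_(i in A) _]big_mkcond /=.
rewrite -sum1_card partition_disjoint_bigcup //.
by apply: eq_bigr => i _; rewrite sum1_card /GA; case: ifP; rewrite ?cards0.
Qed.

Lemma leq_card_setD (T : finType) (A B : {set T}) : #|A| - #|B| <= #|A :\: B|.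
Proof. by rewrite cardsD leq_sub2l // subset_leq_card // subsetIr. Qed.

Theorem mainTheorem2
  (N F : nat) (HN : 0 < N) (HF : 0 < F) (HFN : F.*2 < N)
  (Frag : finType)                          (* the fragments of M *)
  (HFrag : #|Frag| = F.+1 * N)
  (S : 'I_N -> {set Frag})                  (* pools S_1..S_N *)
  (HS_card : forall j, #|S j| = F.+1)
  (HS_disj : forall i j, i != j -> [disjoint S i & S j])
  (Hstore : 'I_N -> {set Frag})             (* fragments stored before pruning *)
  (Hstore_sub : forall j, Hstore j \subset S j)
  (Q : {set 'I_N}) (HQ : F < #|Q|)
  (HQstore : forall u, u \in Q -> prune_rule F #|Q| <= #|Hstore u|)
  (q : 'I_N -> nat)                         (* local values q_u *)
  (Hq : forall u, u \in Q -> F < q u <= #|Q|)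
  (P : 'I_N -> {set Frag})                  (* fragments retained after pruning *)
  (HP_sub : forall u, u \in Q -> P u \subset Hstore u)
  (HP_card : forall u, u \in Q -> #|P u| = minn #|Hstore u| (prune_rule F (q u)))
  (C : {set 'I_N}) (HC : #|C| <= F) :
  F.+1 <= #|\bigcup_(u in Q :\: C) P u|.
Proof.
set r := prune_rule F #|Q|.
have P_large u : u \in Q :\: C -> r <= #|P u|.
  case/setDP=> uQ _; case/andP: (Hq u uQ) => Fq qQ.
  by rewrite HP_card // leq_min HQstore // leq_prune_rule.
have P_disj : {in Q :\: C &, forall i j, i != j -> [disjoint P i & P j]}.
  move=> i j /setDP[iQ _] /setDP[jQ _] /HS_disj; apply: disjointW.
    exact: subset_trans (HP_sub i iQ) (Hstore_sub i).
  exact: subset_trans (HP_sub j jQ) (Hstore_sub j).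
have survivors : #|Q| - F <= #|Q :\: C|.
  exact: leq_trans (leq_sub2l _ HC) (leq_card_setD Q C).
rewrite card_bigcup_disjoint //.
apply: leq_trans (prune_rule_cover HQ) _.
apply: leq_trans (leq_mul (leqnn r) survivors) _.
by rewrite mulnC -sum_nat_const leq_sum.
Qed.
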